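(* Let $X$ be a proper CAT(0) space and let $b$ and $c$ be distinct geodesic rays starting at $\mathfrak o$. Then for every $n>0$, $c$ is not contained in $\mathcal N_\kappa(b,n)$. In particular, distinct geodesic rays do not $\kappa$--fellow travel, so each $\kappa$--fellow travelling class of quasi-geodesic rays contains at most one geodesic ray.
   Context: $X$ has base point $\mathfrak o$, $\|x\|=d_X(\mathfrak o,x)$. $\kappa:[0,\infty)\to[1,\infty)$ is monotone increasing, concave and sublinear, $\kappa(x):=\kappa(\|x\|)$. $\mathcal N_\kappa(Z,n)=\{x: d_X(x,Z)\le n\,\kappa(x)\}$. Two quasi-geodesic rays (continuous quasi-isometric embeddings of $[0,\infty)$ starting at $\mathfrak o$) $\kappa$--fellow travel if each lies in some $(\kappa,n)$--neighbourhood of the other. *)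

From Stdlib Require Import Reals.
Open Scope R_scope.

Definition is_metric {X : Type} (d : X -> X -> R) : Prop :=
  (forall x y, 0 <= d x y) /\
  (forall x y, d x y = 0 <-> x = y) /\
  (forall x y, d x y = d y x) /\
  (forall x y z, d x z <= d x y + d y z).

Definition geodesic_from_to {X : Type} (d : X -> X -> R) (g : R -> X) (x y : X) : Prop :=
  g 0 = x /\ g (d x y) = y /\
  forall s t, 0 <= s <= d x y -> 0 <= t <= d x y -> d (g s) (g t) = Rabs (s - t).

Definition geodesic_space {X : Type} (d : X -> X -> R) : Prop :=
  forall x y, exists g, geodesic_from_to d g x y.

Definition eucl (a b : R * R) : R :=
  sqrt ((fst a - fst b) ^ 2 + (snd a - snd b) ^ 2).

Definition seg_point (a b : R * R) (s : R) : R * R :=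
  let l := eucl a b in
  (fst a + (s / l) * (fst b - fst a), snd a + (s / l) * (snd b - snd a)).

(** Since x, y, z range over all triples, this covers every pair of
    distinct sides; points on the same side satisfy it with equality. *)
Definition CAT0_ineq {X : Type} (d : X -> X -> R) : Prop :=
  forall (x y z : X) (g1 g2 : R -> X) (a b c : R * R) (s t : R),
    geodesic_from_to d g1 x y -> geodesic_from_to d g2 x z ->
    eucl a b = d x y -> eucl a c = d x z -> eucl b c = d y z ->
    0 <= s <= d x y -> 0 <= t <= d x z ->
    d (g1 s) (g2 t) <= eucl (seg_point a b s) (seg_point a c t).

Definition CAT0_space {X : Type} (d : X -> X -> R) : Prop :=
  is_metric d /\ geodesic_space d /\ CAT0_ineq d.

(** Proper: closed balls are compact (sequential compactness, equivalent
    to compactness in metric spaces). *)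
Definition proper_space {X : Type} (d : X -> X -> R) : Prop :=
  forall (x0 : X) (r : R) (u : nat -> X),
    (forall n, d x0 (u n) <= r) ->
    exists (phi : nat -> nat) (l : X),
      (forall n m, (n < m)%nat -> (phi n < phi m)%nat) /\
      d x0 l <= r /\
      forall eps, eps > 0 -> exists N, forall n, (n >= N)%nat -> d (u (phi n)) l < eps.

Definition quasi_geodesic_ray {X : Type} (d : X -> X -> R) (o : X) (q : R -> X) : Prop :=
  q 0 = o /\
  (forall t, 0 <= t -> forall eps, eps > 0 -> exists delta, delta > 0 /\
      forall s, 0 <= s -> Rabs (s - t) < delta -> d (q s) (q t) < eps) /\
  exists K C, K >= 1 /\ C >= 0 /\
    forall s t, 0 <= s -> 0 <= t ->
      Rabs (s - t) / K - C <= d (q s) (q t) <= K * Rabs (s - t) + C.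

Definition geodesic_ray {X : Type} (d : X -> X -> R) (o : X) (c : R -> X) : Prop :=
  c 0 = o /\ forall s t, 0 <= s -> 0 <= t -> d (c s) (c t) = Rabs (s - t).

Definition distinct_rays {X : Type} (b c : R -> X) : Prop :=
  exists t, 0 <= t /\ b t <> c t.

Definition sublinear_kappa (kappa : R -> R) : Prop :=
  (forall t, 0 <= t -> 1 <= kappa t) /\
  (forall s t, 0 <= s -> s <= t -> kappa s <= kappa t) /\
  (forall s t l, 0 <= s -> 0 <= t -> 0 <= l <= 1 ->
      l * kappa s + (1 - l) * kappa t <= kappa (l * s + (1 - l) * t)) /\
  (forall eps, eps > 0 -> exists T, forall t, t >= T -> t > 0 -> kappa t / t < eps).

(** d(x, Z) <= r, where Z = image of [0,oo) under the ray b, and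
    d(x,Z) = inf_{z in Z} d(x,z). *)
Definition dist_to_ray_le {X : Type} (d : X -> X -> R) (x : X) (b : R -> X) (r : R) : Prop :=
  forall eps, eps > 0 -> exists t, 0 <= t /\ d x (b t) < r + eps.

Definition in_kappa_nbhd {X : Type} (d : X -> X -> R) (o : X) (kappa : R -> R)
    (c b : R -> X) (n : R) : Prop :=
  forall t, 0 <= t -> dist_to_ray_le d (c t) b (n * kappa (d o (c t))).

Definition kappa_fellow_travel {X : Type} (d : X -> X -> R) (o : X) (kappa : R -> R)
    (b c : R -> X) : Prop :=
  (exists n, n > 0 /\ in_kappa_nbhd d o kappa c b n) /\
  (exists n, n > 0 /\ in_kappa_nbhd d o kappa b c n).

From Stdlib Require Import Reals Lra Psatz.
Open Scope R_scope.

(** Distinct geodesic rays b, c from o in a CAT(0) space diverge linearly,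
    while a ray in a kappa-neighbourhood of another stays sublinearly close.

    - In a Euclidean isosceles triangle with legs T and base D, the points at
      distance s from the apex on the two legs are at distance s * D / T.
    - Hence, by the CAT(0) inequality applied to the triangle o, b T, c T,
      for 0 <= t <= T we get T * d(b t, c t) <= t * d(b T, c T): the
      separation of two rays grows at least linearly.
    - In any metric space, if x is within r of a geodesic ray b from o, then
      x is within 2r of b(|x|), the point of b at the same distance from o.
      So c inside N_kappa(b, n) gives d(b T, c T) <= 2 n kappa(T).
    - Picking t0 with b t0 <> c t0 and T large, sublinearity of kappa
      contradicts the linear lower bound.  Fellow travelling would in
      particular put c in some N_kappa(b, n), so it is impossible too. *)

Lemma isosceles_comparison_triangle (T D s : R) :
  0 < T -> 0 <= D <= 2 * T -> 0 <= s <= T ->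
  exists a b c, eucl a b = T /\ eucl a c = T /\ eucl b c = D /\
    eucl (seg_point a b s) (seg_point a c s) = s * D / T.
Proof.
  intros HT HD Hs.
  assert (sqrt_sq : forall e v, 0 <= v -> e = v * v -> sqrt e = v)
    by (intros e v Hv ->; apply sqrt_square; lra).
  (* apex at the origin, b = (T, 0), c = (x, y) with |c| = T and |b - c| = D *)
  set (x := T - D * D / (2 * T)).
  assert (Hbase : 2 * T * T - 2 * T * x = D * D) by (unfold x; field; lra).
  assert (Hx : - T <= x <= T).
  { assert (0 <= D * D / (2 * T) <= 2 * T); [|unfold x; lra].
    split; [apply Rmult_le_pos; [nra | left; apply Rinv_0_lt_compat; lra]|].
    apply Rmult_le_reg_r with (2 * T); [lra|].
    unfold Rdiv; rewrite Rmult_assoc, Rinv_l by lra; nra. }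
  set (y := sqrt (T * T - x * x)).
  assert (Hy : y ^ 2 = T * T - x * x)
    by (rewrite <- (sqrt_sqrt (T * T - x * x)) by nra; unfold y; ring).
  assert (Eab : eucl (0, 0) (T, 0) = T)
    by (unfold eucl; simpl; apply sqrt_sq; lra).
  assert (Eac : eucl (0, 0) (x, y) = T)
    by (unfold eucl; simpl; apply sqrt_sq; nra).
  exists (0, 0), (T, 0), (x, y).
  split; [exact Eab|]. split; [exact Eac|]. split.
  - unfold eucl; simpl. apply sqrt_sq; nra.
  - unfold seg_point. rewrite Eab, Eac. unfold eucl; simpl.
    apply sqrt_sq.
    + apply Rmult_le_pos; [nra | left; apply Rinv_0_lt_compat; lra].
    + field_simplify; try lra. rewrite Hy.
      f_equal. replace (D ^ 2) with (D * D) by ring. rewrite <- Hbase. ring.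
Qed.

Section GeodesicRays.

Variables (X : Type) (d : X -> X -> R) (o : X).
Hypothesis d_metric : is_metric d.

Lemma ray_norm (b : R -> X) (T : R) :
  geodesic_ray d o b -> 0 <= T -> d o (b T) = T.
Proof.
  intros [b0 biso] HT. rewrite <- b0, biso by lra.
  rewrite Rabs_left1 by lra. lra.
Qed.

Lemma ray_segment (b : R -> X) (T : R) :
  geodesic_ray d o b -> 0 <= T -> geodesic_from_to d b o (b T).
Proof.
  intros Hb HT. pose proof (ray_norm b T Hb HT) as Enorm.
  destruct Hb as [b0 biso]. unfold geodesic_from_to. rewrite Enorm.
  split; [exact b0|]. split; [reflexivity|].
  intros s t Hs Ht. apply biso; lra.
Qed.

(** A point within r of a geodesic ray b from o is within 2 r of the point
    of b at the same distance from o: by the reverse triangle inequality,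
    d(x, b s) >= | |x| - s | = d(b |x|, b s). *)
Lemma near_ray_same_norm (b : R -> X) (x : X) (r : R) :
  geodesic_ray d o b -> dist_to_ray_le d x b r -> d x (b (d o x)) <= 2 * r.
Proof.
  destruct d_metric as [dpos [_ [dsym dtri]]].
  intros Hb Hnear. apply Rle_plus_epsilon. intros eps Heps.
  destruct (Hnear (eps / 2) ltac:(lra)) as [s [Hs Hclose]].
  assert (Hnx : 0 <= d o x) by apply dpos.
  assert (Halong : d (b (d o x)) (b s) = Rabs (d o x - s))
    by (apply (proj2 Hb); lra).
  assert (Hrev : Rabs (d o x - s) <= d x (b s)).
  { pose proof (dtri o x (b s)). pose proof (dtri o (b s) x).
    rewrite (ray_norm b s Hb Hs) in *. rewrite (dsym (b s) x) in *.
    apply Rabs_le; lra. }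
  pose proof (dtri x (b s) (b (d o x))). rewrite (dsym (b s)) in *. lra.
Qed.

(** Linear divergence of geodesic rays in a CAT(0) space: for 0 <= t <= T,
    T * d(b t, c t) <= t * d(b T, c T), by comparison with the Euclidean
    isosceles triangle of the geodesic triangle (o, b T, c T). *)
Lemma cat0_rays_diverge_linearly (b c : R -> X) (t T : R) :
  CAT0_ineq d -> geodesic_ray d o b -> geodesic_ray d o c ->
  0 <= t <= T -> 0 < T -> T * d (b t) (c t) <= t * d (b T) (c T).
Proof.
  destruct d_metric as [dpos [_ [dsym dtri]]].
  intros Hcat Hb Hc Ht HT.
  set (D := d (b T) (c T)).
  assert (HD : 0 <= D <= 2 * T).
  { split; [apply dpos|]. pose proof (dtri (b T) o (c T)).
    rewrite (dsym (b T) o), (ray_norm b T Hb), (ray_norm c T Hc) in * by lra.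
    unfold D; lra. }
  destruct (isosceles_comparison_triangle T D t HT HD Ht)
    as [pa [pb [pc [Eab [Eac [Ebc Epts]]]]]].
  pose proof (Hcat o (b T) (c T) b c pa pb pc t t
    (ray_segment b T Hb ltac:(lra)) (ray_segment c T Hc ltac:(lra))) as Hcmp.
  rewrite (ray_norm b T Hb), (ray_norm c T Hc) in Hcmp by lra.
  specialize (Hcmp Eab Eac Ebc ltac:(lra) ltac:(lra)).
  rewrite Epts in Hcmp.
  apply Rmult_le_compat_l with (r := T) in Hcmp; [|lra].
  replace (T * (t * D / T)) with (t * D) in Hcmp by (field; lra). lra.
Qed.

Lemma distinct_rays_separated (b c : R -> X) :
  geodesic_ray d o b -> geodesic_ray d o c -> distinct_rays b c ->
  exists t0, 0 < t0 /\ 0 < d (b t0) (c t0).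
Proof.
  destruct d_metric as [dpos [dzero _]].
  intros [b0 _] [c0 _] [t0 [Ht0 Hne]]. exists t0. split.
  - destruct Ht0 as [Hlt | <-]; [exact Hlt|]. rewrite b0, c0 in Hne. easy.
  - destruct (dpos (b t0) (c t0)) as [Hlt | Heq]; [exact Hlt|].
    exfalso. apply Hne, dzero. auto.
Qed.

End GeodesicRays.

Lemma sublinear_below_linear (kappa : R -> R) (eps T0 : R) :
  sublinear_kappa kappa -> 0 < eps ->
  exists T, T0 <= T /\ 0 < T /\ kappa T < eps * T.
Proof.
  intros [_ [_ [_ Hsub]]] Heps.
  destruct (Hsub eps Heps) as [T1 HT1].
  set (T := Rmax (Rmax T1 T0) 1).
  assert (HT : T1 <= T /\ T0 <= T /\ 1 <= T).
  { unfold T. pose proof (Rmax_l T1 T0). pose proof (Rmax_r T1 T0).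
    pose proof (Rmax_l (Rmax T1 T0) 1). pose proof (Rmax_r (Rmax T1 T0) 1). lra. }
  exists T. split; [lra|]. split; [lra|].
  specialize (HT1 T ltac:(lra) ltac:(lra)).
  apply Rmult_lt_compat_r with (r := T) in HT1; [|lra].
  unfold Rdiv in HT1. rewrite Rmult_assoc, Rinv_l, Rmult_1_r in HT1 by lra.
  exact HT1.
Qed.

Theorem lemma3p3 (X : Type) (d : X -> X -> R) (o : X) (kappa : R -> R)
    (hX : CAT0_space d) (hprop : proper_space d) (hk : sublinear_kappa kappa)
    (b c : R -> X) (hb : geodesic_ray d o b) (hc : geodesic_ray d o c)
    (hbc : distinct_rays b c) :
  (forall n, n > 0 -> ~ in_kappa_nbhd d o kappa c b n) /\
  ~ kappa_fellow_travel d o kappa b c.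
Proof.
  destruct hX as [Hmetric [_ Hcat]].
  assert (not_in_nbhd : forall n, n > 0 -> ~ in_kappa_nbhd d o kappa c b n).
  { intros n Hn Hin.
    destruct (distinct_rays_separated X d o Hmetric b c hb hc hbc)
      as [t0 [Ht0 Hsep]].
    set (delta := d (b t0) (c t0)) in Hsep.
    (* T large with 2 n t0 kappa(T) < delta * T *)
    destruct (sublinear_below_linear kappa (delta / (2 * n * t0)) t0 hk)
      as [T [HT0 [HT Hsmall]]].
    { apply Rdiv_lt_0_compat; nra. }
    assert (Hlower : T * delta <= t0 * d (b T) (c T))
      by (apply (cat0_rays_diverge_linearly X d o Hmetric b c t0 T Hcat hb hc); lra).
    assert (Hupper : d (b T) (c T) <= 2 * (n * kappa T)).
    { pose proof (near_ray_same_norm X d o Hmetric b (c T) _ hb (Hin T ltac:(lra))) as H.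
      rewrite (ray_norm X d o c T hc ltac:(lra)) in H.
      rewrite (proj1 (proj2 (proj2 Hmetric))). exact H. }
    apply Rmult_lt_compat_l with (r := 2 * n * t0) in Hsmall; [|nra].
    replace (2 * n * t0 * (delta / (2 * n * t0) * T)) with (T * delta) in Hsmall
      by (field; lra).
    nra. }
  split; [exact not_in_nbhd|].
  intros [[n [Hn Hin]] _]. exact (not_in_nbhd n Hn Hin).
Qed.
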